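(* Let $n \ge 2$ be an integer and let $\underline{x}_1,\bar{x}_1,\underline{x}_2,\bar{x}_2 \in \mathbb{R}$ with $1 \le \underline{x}_i < \bar{x}_i$ for $i \in \{1,2\}$. For every $(x_1,x_2) \in [\underline{x}_1,\bar{x}_1] \times [\underline{x}_2,\bar{x}_2]$, every point $y \in \mathbb{R}^{n+2}$ that is feasible for the lower-level problem $$\max_{y \in \mathbb{R}^{n+2}} \; y_1 - y_n\,(x_1 + x_2 - y_{n+1} - y_{n+2})$$ subject to $y_1 + y_n = \tfrac12$, $y_i^2 \le y_{i+1}$ for $i \in \{1,\dots,n-1\}$, $y_i \ge 0$ for $i \in \{1,\dots,n\}$, $y_{n+1} \in [0,x_1]$, $y_{n+2} \in [-x_2,x_2]$, satisfies $y_n > 0$.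
   Context: This lower-level problem is the follower's problem of a bilevel problem whose leader chooses $x=(x_1,x_2)$ in the box $[\underline{x}_1,\bar{x}_1] \times [\underline{x}_2,\bar{x}_2]$. *)

From Stdlib Require Import Reals Lra.
Open Scope R_scope.

(* Points y in R^(n+2) are represented as functions y : nat -> R,
   using 1-based indices 1..n+2; values at other indices are irrelevant. *)

Definition lower_obj (n : nat) (x1 x2 : R) (y : nat -> R) : R :=
  y 1%nat - y n * (x1 + x2 - y (n + 1)%nat - y (n + 2)%nat).

Definition lower_feasible (n : nat) (x1 x2 : R) (y : nat -> R) : Prop :=
  y 1%nat + y n = 1 / 2 /\
  (forall i : nat, (1 <= i <= n - 1)%nat -> (y i) ^ 2 <= y (i + 1)%nat) /\
  (forall i : nat, (1 <= i <= n)%nat -> 0 <= y i) /\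
  (0 <= y (n + 1)%nat <= x1) /\
  (- x2 <= y (n + 2)%nat <= x2).

From Stdlib Require Import Reals Lra Lia.
Open Scope R_scope.

(* If y_n <= 0 then y_1 >= 1/2 > 0, and since y_(i+1) >= y_i^2 > 0 whenever
   y_i > 0, positivity propagates along the chain from y_1 to y_n. *)

Lemma square_chain_pos (y : nat -> R) (a m : nat) :
  (forall i, (a <= i < a + m)%nat -> y i ^ 2 <= y (i + 1)%nat) ->
  0 < y a -> 0 < y (a + m)%nat.
Proof.
  intros Hchain Ha.
  induction m as [|m IH].
  - rewrite Nat.add_0_r; exact Ha.
  - assert (Hpos : 0 < y (a + m)%nat) by (apply IH; intros i Hi; apply Hchain; lia).
    assert (Hstep : y (a + m)%nat ^ 2 <= y (a + m + 1)%nat) by (apply Hchain; lia).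
    assert (Hsq : 0 < y (a + m)%nat ^ 2) by (apply pow_lt; exact Hpos).
    replace (a + S m)%nat with (a + m + 1)%nat by lia.
    lra.
Qed.

Theorem mainTheorem1 (n : nat) (xl1 xu1 xl2 xu2 : R) :
  (2 <= n)%nat ->
  1 <= xl1 -> xl1 < xu1 -> 1 <= xl2 -> xl2 < xu2 ->
  forall x1 x2 : R, xl1 <= x1 <= xu1 -> xl2 <= x2 <= xu2 ->
  forall y : nat -> R, lower_feasible n x1 x2 y -> 0 < y n.
Proof.
  intros Hn _ _ _ _ x1 x2 _ _ y [Hsum [Hchain _]].
  destruct (Rle_lt_dec (y n) 0) as [Hle | Hlt]; [| exact Hlt].
  assert (Hy1 : 0 < y 1%nat) by lra.
  replace n with (1 + (n - 1))%nat by lia.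
  apply square_chain_pos; [intros i Hi; apply Hchain; lia | exact Hy1].
Qed.
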